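(* Let $h>0$ and let $(\tau,\mu):\mathbb R\to\mathbb R^2$ be any solution of the system $\tau'=1+K(\tau,\mu)\mu$, $\mu'=-K(\tau,\mu)\tau$. Then there is a compact interval $[A,B]\subset\mathbb R$ such that $\mu\neq0$ outside $[A,B]$ and the function $\nu=-\tau/\mu$ is bounded on $\mathbb R\setminus[A,B]$.
   Context: Fix $h>0$. For $(\tau,\mu)\in\mathbb R^2$ put $r^2=\tau^2+\mu^2$ and define $K:\mathbb R^2\to\mathbb R$ by $$K(\tau,\mu)=\frac{2\big(\tau^2+h^2(1+\mu^2)\big)\tau+(h^2-1)(1+\mu^2)\mu}{(1+r^2)(h^2+r^2)}.$$ Consider the autonomous ODE system $\tau'=1+K(\tau,\mu)\mu$, $\mu'=-K(\tau,\mu)\tau$ for functions $s\mapsto(\tau(s),\mu(s))$; all its solutions are defined on $\mathbb R$. *)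

From Stdlib Require Import Reals.
Open Scope R_scope.

Definition Kfun (h tau mu : R) : R :=
  let r2 := tau ^ 2 + mu ^ 2 in
  (2 * (tau ^ 2 + h ^ 2 * (1 + mu ^ 2)) * tau + (h ^ 2 - 1) * (1 + mu ^ 2) * mu)
  / ((1 + r2) * (h ^ 2 + r2)).

(* G = mu * sqrt ((1 + r^2) / ((1 + mu^2) (h^2 + r^2))), with r^2 = tau^2 + mu^2, is
   nonincreasing along every solution.  Hence once mu < 0 it stays negative and bounded away
   from 0, and the slope tau / mu, whose derivative has the sign of an explicit polynomial,
   is then trapped between two barriers forever after.  Every solution does reach mu < 0: if
   mu >= 0 throughout, then mu > 0, and either the slope stays <= -1/2, so that
   tau - k (tau^2 + mu^2) grows linearly while staying nonpositive, or it rises above -1/2,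
   after which it grows logarithmically past 1 + 1/h^2, where K >= 0 and K tau >= 1/4 push
   mu below 0.  The symmetry (tau, mu)(s) -> (-tau, -mu)(-s) of the system handles
   s -> -oo. *)

From Stdlib Require Import Reals Lra Psatz Classical.
Open Scope R_scope.

Section DerivativeRules.

Variables (f g : R -> R) (x a b : R).
Hypotheses (df : derivable_pt_lim f x a) (dg : derivable_pt_lim g x b).

Lemma deriv_plus : derivable_pt_lim (fun t => f t + g t) x (a + b).
Proof. exact (derivable_pt_lim_plus f g x a b df dg). Qed.

Lemma deriv_minus : derivable_pt_lim (fun t => f t - g t) x (a - b).
Proof. exact (derivable_pt_lim_minus f g x a b df dg). Qed.

Lemma deriv_mult : derivable_pt_lim (fun t => f t * g t) x (a * g x + f x * b).
Proof. exact (derivable_pt_lim_mult f g x a b df dg). Qed.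

Lemma deriv_scal (c : R) : derivable_pt_lim (fun t => c * f t) x (c * a).
Proof. exact (derivable_pt_lim_scal f c x a df). Qed.

Lemma deriv_div : g x <> 0 ->
  derivable_pt_lim (fun t => f t / g t) x ((a * g x - b * f x) / g x ^ 2).
Proof.
  intros gx. replace (g x ^ 2) with (Rsqr (g x)) by (unfold Rsqr; ring).
  exact (derivable_pt_lim_div f g x a b df dg gx).
Qed.

Lemma deriv_sqr : derivable_pt_lim (fun t => f t ^ 2) x (2 * f x * a).
Proof.
  replace (2 * f x * a) with (INR 2 * f x ^ Init.Nat.pred 2 * a) by (simpl; ring).
  exact (derivable_pt_lim_comp f (fun y => y ^ 2) x a _ df (derivable_pt_lim_pow _ 2)).
Qed.

Lemma deriv_sqrt : 0 < f x ->
  derivable_pt_lim (fun t => sqrt (f t)) x (a / (2 * sqrt (f x))).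
Proof.
  intros fx. replace (a / (2 * sqrt (f x))) with (/ (2 * sqrt (f x)) * a) by (unfold Rdiv; ring).
  exact (derivable_pt_lim_comp f sqrt x a _ df (derivable_pt_lim_sqrt _ fx)).
Qed.

Lemma deriv_ln : 0 < f x -> derivable_pt_lim (fun t => ln (f t)) x (a / f x).
Proof.
  intros fx. replace (a / f x) with (/ f x * a) by (unfold Rdiv; ring).
  exact (derivable_pt_lim_comp f ln x a _ df (derivable_pt_lim_ln _ fx)).
Qed.

End DerivativeRules.

Lemma deriv_eq (f : R -> R) x a b : derivable_pt_lim f x a -> a = b -> derivable_pt_lim f x b.
Proof. now intros H <-. Qed.

Lemma deriv_reflect (f : R -> R) x a :
  derivable_pt_lim f (- x) a -> derivable_pt_lim (fun t => - f (- t)) x a.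
Proof.
  intros df. replace a with (- (a * -1)) by ring.
  apply (derivable_pt_lim_opp (fun t => f (- t))).
  apply (derivable_pt_lim_comp Ropp f x (-1) a); [|exact df].
  apply (deriv_eq _ _ (- 1)); [|ring].
  apply (derivable_pt_lim_opp id), derivable_pt_lim_id.
Qed.

Lemma derivable_pt_lim_locally_const (f : R -> R) x l a b c :
  a < x < b -> (forall z, a < z < b -> f z = c) -> derivable_pt_lim f x l -> l = 0.
Proof.
  intros hx hf df.
  apply (uniqueness_limite f x); [exact df|].
  apply (derivable_pt_lim_locally_ext (fun _ => c) f x a b 0 hx).
  - intros z hz. now rewrite hf.
  - apply derivable_pt_lim_const.
Qed.

Lemma derivable_pt_lim_pos_right (g : R -> R) c l d :
  derivable_pt_lim g c l -> 0 < l -> 0 < d -> exists t, c < t < c + d /\ g c < g t.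
Proof.
  intros dg hl hd.
  destruct (dg (l / 2) ltac:(lra)) as [del hdel]. pose proof (cond_pos del).
  set (e := Rmin (del / 2) (d / 2)).
  assert (0 < e) by (apply Rmin_pos; lra).
  assert (e <= del / 2) by apply Rmin_l. assert (e <= d / 2) by apply Rmin_r.
  specialize (hdel e ltac:(lra) ltac:(rewrite Rabs_pos_eq; lra)).
  apply Rabs_def2 in hdel.
  exists (c + e). split; [lra|].
  assert (E : g (c + e) - g c = (g (c + e) - g c) / e * e) by (field; lra).
  nra.
Qed.

Lemma derivable_pt_lim_cont_eps (g : R -> R) c l : derivable_pt_lim g c l ->
  forall eps, 0 < eps -> exists del, 0 < del /\
    forall t, Rabs (t - c) < del -> Rabs (g t - g c) < eps.
Proof.
  intros dg eps heps.
  assert (hc : continuity_pt g c) by (apply derivable_continuous_pt; now exists l).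
  destruct (hc eps heps) as [del [hdel hg]].
  exists del. split; [exact hdel|]. intros t ht.
  destruct (Req_dec t c) as [->|hne].
  - now rewrite Rminus_diag, Rabs_R0.
  - apply (hg t). split; [split; [exact I|auto]|exact ht].
Qed.

Lemma last_crossing (g g' : R -> R) a b L : a < b ->
  (forall t, a <= t <= b -> derivable_pt_lim g t (g' t)) -> L <= g a -> g b < L ->
  exists c, a <= c < b /\ g c = L /\ forall t, c < t <= b -> g t < L.
Proof.
  intros hab dg ha hb.
  set (E := fun t => a <= t <= b /\ L <= g t).
  destruct (completeness E) as [c [hub hlub]].
  { exists b. now intros t [[_ ?] _]. }
  { exists a. unfold E; lra. }
  assert (hac : a <= c) by (apply hub; unfold E; lra).
  assert (hcb : c <= b) by (apply hlub; now intros t [[_ ?] _]).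
  assert (hge : L <= g c).
  { apply Rnot_lt_le. intros hlt.
    destruct (derivable_pt_lim_cont_eps g c _ (dg c ltac:(lra)) (L - g c) ltac:(lra))
      as [del [hdel hc]].
    enough (c <= c - del / 2) by lra.
    apply hlub. intros t [ht hLt].
    apply Rnot_lt_le. intros hlt'.
    assert (t <= c) by (apply hub; split; assumption).
    specialize (hc t ltac:(rewrite Rabs_left1; lra)). apply Rabs_def2 in hc. lra. }
  assert (hcb' : c < b) by (destruct (Req_dec c b); subst; lra).
  assert (hle : g c <= L).
  { apply Rnot_lt_le. intros hlt.
    destruct (derivable_pt_lim_cont_eps g c _ (dg c ltac:(lra)) (g c - L) ltac:(lra))
      as [del [hdel hc]].
    set (t := Rmin (c + del / 2) b).
    assert (t <= b) by apply Rmin_r. assert (t <= c + del / 2) by apply Rmin_l.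
    assert (c < t) by (apply Rmin_glb_lt; lra).
    enough (t <= c) by lra.
    apply hub. split; [lra|].
    specialize (hc t ltac:(rewrite Rabs_pos_eq; lra)). apply Rabs_def2 in hc. lra. }
  exists c. split; [lra|]. split; [lra|].
  intros t ht. apply Rnot_le_lt. intros hLt.
  assert (t <= c) by (apply hub; unfold E; split; [lra|exact hLt]). lra.
Qed.

Lemma barrier_above (g g' : R -> R) a L :
  (forall t, a <= t -> derivable_pt_lim g t (g' t)) -> L <= g a ->
  (forall t, a <= t -> g t = L -> 0 < g' t) -> forall t, a <= t -> L <= g t.
Proof.
  intros dg ha hL t ht. apply Rnot_lt_le. intros hlt.
  destruct (Req_dec t a) as [->|hne]; [lra|].
  destruct (last_crossing g g' a t L ltac:(lra) (fun u hu => dg u (proj1 hu)) ha hlt)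
    as [c [hc [hgc hafter]]].
  destruct (derivable_pt_lim_pos_right g c (g' c) (t - c) (dg c ltac:(lra))
              (hL c ltac:(lra) hgc) ltac:(lra)) as [u [hu hgu]].
  specialize (hafter u ltac:(lra)). lra.
Qed.

Lemma barrier_below (g g' : R -> R) a U :
  (forall t, a <= t -> derivable_pt_lim g t (g' t)) -> g a <= U ->
  (forall t, a <= t -> g t = U -> g' t < 0) -> forall t, a <= t -> g t <= U.
Proof.
  intros dg ha hU t ht.
  enough (- U <= - g t) by lra.
  apply (barrier_above (fun s => - g s) (fun s => - g' s) a); auto; try lra.
  - intros s hs. apply (derivable_pt_lim_opp g). auto.
  - intros s hs hgs. enough (g' s < 0) by lra. apply hU; auto. lra.
Qed.

Lemma MVT_upper_bound (g g' : R -> R) a b k : a <= b ->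
  (forall t, a <= t <= b -> derivable_pt_lim g t (g' t)) ->
  (forall t, a < t < b -> g' t <= k) -> g b - g a <= k * (b - a).
Proof.
  intros [hab| <-] dg hk; [|lra].
  destruct (MVT_cor2 g g' a b hab dg) as [c [-> hc]].
  apply Rmult_le_compat_r; [lra|]. now apply hk.
Qed.

Lemma MVT_lower_bound (g g' : R -> R) a b k : a <= b ->
  (forall t, a <= t <= b -> derivable_pt_lim g t (g' t)) ->
  (forall t, a < t < b -> k <= g' t) -> k * (b - a) <= g b - g a.
Proof.
  intros [hab| <-] dg hk; [|lra].
  destruct (MVT_cor2 g g' a b hab dg) as [c [-> hc]].
  apply Rmult_le_compat_r; [lra|]. now apply hk.
Qed.

(* phi - (c / B) ln(x0 + B (t - a)) is nondecreasing, and the logarithm is unbounded. *)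
Lemma unbounded_of_deriv_ge_inv_affine (phi phi' : R -> R) a x0 B c :
  0 < x0 -> 0 < B -> 0 < c ->
  (forall t, a <= t -> derivable_pt_lim phi t (phi' t)) ->
  (forall t, a <= t -> c / (x0 + B * (t - a)) <= phi' t) ->
  forall A, exists t, a <= t /\ A <= phi t.
Proof.
  intros hx0 hB hc dphi hphi A.
  set (X := fun t => x0 + B * (t - a)).
  assert (hX : forall t, a <= t -> x0 <= X t) by (intros t ht; unfold X; nra).
  assert (hmono : forall t, a <= t ->
            phi a - c / B * ln (X a) <= phi t - c / B * ln (X t)).
  { intros t ht.
    enough (0 * (t - a) <= (phi t - c / B * ln (X t)) - (phi a - c / B * ln (X a))) by lra.
    apply (MVT_lower_bound (fun u => phi u - c / B * ln (X u))
             (fun u => phi' u - c / B * (B / X u))); auto.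
    - intros u hu. apply deriv_minus; [now apply dphi|].
      apply deriv_scal, deriv_ln; [|pose proof (hX u (proj1 hu)); lra].
      apply (deriv_eq _ _ (0 + B * (1 - 0))); [|ring].
      apply deriv_plus; [apply derivable_pt_lim_const|].
      apply deriv_scal, deriv_minus; [apply derivable_pt_lim_id|apply derivable_pt_lim_const].
    - intros u hu. pose proof (hX u ltac:(lra)).
      replace (c / B * (B / X u)) with (c / X u) by (field; split; lra).
      pose proof (hphi u ltac:(lra)). unfold X. lra. }
  set (Y := B / c * (A - phi a) + ln x0).
  set (t := a + exp Y / B).
  assert (ht : a <= t).
  { pose proof (exp_pos Y). assert (0 < exp Y / B) by (apply Rdiv_lt_0_compat; lra).
    unfold t. lra. }
  exists t. split; [exact ht|].
  assert (hln : Y <= ln (X t)).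
  { rewrite <- (ln_exp Y) at 1. left. apply ln_increasing; [apply exp_pos|].
    unfold X, t. field_simplify; lra. }
  pose proof (hmono t ht) as hm. replace (X a) with x0 in hm by (unfold X; ring).
  assert (c / B * Y <= c / B * ln (X t))
    by (apply Rmult_le_compat_l; [left; apply Rdiv_lt_0_compat|]; lra).
  assert (c / B * Y = A - phi a + c / B * ln x0) by (unfold Y; field; lra).
  lra.
Qed.

Section Flow.

Variable h : R.
Hypothesis h_pos : 0 < h.

Lemma h2_pos : 0 < h ^ 2.
Proof. now apply pow_lt. Qed.

Definition Knum t m := 2 * (t ^ 2 + h ^ 2 * (1 + m ^ 2)) * t + (h ^ 2 - 1) * (1 + m ^ 2) * m.
Definition Kden t m := (1 + (t ^ 2 + m ^ 2)) * (h ^ 2 + (t ^ 2 + m ^ 2)).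

Lemma Kfun_eq t m : Kfun h t m = Knum t m / Kden t m.
Proof. reflexivity. Qed.

Lemma Kden_pos t m : 0 < Kden t m.
Proof. unfold Kden. apply Rmult_lt_0_compat; nra. Qed.

Lemma Kden_ge t m : h ^ 2 <= Kden t m.
Proof. unfold Kden. nra. Qed.

Lemma Kfun_opp t m : Kfun h (- t) (- m) = - Kfun h t m.
Proof. rewrite !Kfun_eq. unfold Knum, Kden. field. split; nra. Qed.

Lemma Kfun_tau_mu0 t : Kfun h t 0 * t = 2 * t ^ 2 / (1 + t ^ 2).
Proof. rewrite Kfun_eq. unfold Knum, Kden. field. split; nra. Qed.

Lemma Kfun_mul_ge (c x t m : R) : c * Kden t m <= Knum t m * x -> c <= Kfun h t m * x.
Proof.
  intros hN. pose proof (Kden_pos t m). rewrite Kfun_eq.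
  apply (Rmult_le_reg_r (Kden t m)); [lra|].
  replace (Knum t m / Kden t m * x * Kden t m) with (Knum t m * x) by (field; lra). lra.
Qed.

(* h^2 (m + t)^2 + (m - t)^2 >= 0 bounds the mixed term (h^2 - 1) m t. *)
Lemma Kfun_tau_ge t m : - (1 + h ^ 2) <= Kfun h t m * t.
Proof.
  apply Kfun_mul_ge. unfold Knum, Kden.
  assert (hmix : - ((1 + h ^ 2) * (t ^ 2 + m ^ 2)) <= 2 * (h ^ 2 - 1) * m * t).
  { assert (0 <= h ^ 2 * (t + m) ^ 2) by (apply Rmult_le_pos; apply pow2_ge_0).
    pose proof (pow2_ge_0 (t - m)). nra. }
  assert (0 <= 2 * (t ^ 2 + h ^ 2 * (1 + m ^ 2)) * t * t) by nra.
  assert (- ((1 + h ^ 2) * (1 + m ^ 2) * (t ^ 2 + m ^ 2)) <= 2 * (h ^ 2 - 1) * (1 + m ^ 2) * m * t)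
    by nra.
  nra.
Qed.

Lemma Kfun_mu_ge_ball (R0 t m : R) : 0 < m -> t <= - m / 2 -> t ^ 2 + m ^ 2 <= R0 ->
  2 * ((2 + h ^ 2) * (1 + R0) ^ 2 / h ^ 2) * t <= Kfun h t m * m.
Proof.
  intros hm ht hR. apply Kfun_mul_ge.
  set (k := (2 + h ^ 2) * (1 + R0) ^ 2 / h ^ 2).
  assert (h2 : 0 < h ^ 2) by nra.
  assert (hk : k * h ^ 2 = (2 + h ^ 2) * (1 + R0) ^ 2) by (unfold k; field; lra).
  assert (hk0 : 0 <= k) by (unfold k; apply Rmult_le_pos; [nra|left; apply Rinv_0_lt_compat; lra]).
  assert (hN : 2 * (2 + h ^ 2) * (1 + R0) * t <= Knum t m).
  { unfold Knum.
    assert (t ^ 2 + h ^ 2 * (1 + m ^ 2) <= (1 + h ^ 2) * (1 + R0)) by nra.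
    assert (2 * (1 + h ^ 2) * (1 + R0) * t <= 2 * (t ^ 2 + h ^ 2 * (1 + m ^ 2)) * t) by nra.
    assert (2 * (1 + R0) * t <= (h ^ 2 - 1) * (1 + m ^ 2) * m) by nra.
    nra. }
  assert (hNm : 2 * (2 + h ^ 2) * (1 + R0) ^ 2 * t <= Knum t m * m).
  { assert (2 * (2 + h ^ 2) * (1 + R0) * t * m <= Knum t m * m) by nra.
    assert (0 <= t * (m - (1 + R0))) by nra.
    assert (0 <= 2 * (2 + h ^ 2) * (1 + R0)) by nra.
    nra. }
  pose proof (Kden_ge t m).
  assert (2 * k * t * Kden t m <= 2 * k * t * h ^ 2) by (apply Rmult_le_compat_neg_l; [nra|lra]).
  nra.
Qed.

Lemma Kfun_nonneg_steep t m : 0 < m -> m <= t -> m <= h ^ 2 * t -> 0 <= Kfun h t m.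
Proof.
  intros hm ht hht. rewrite <- (Rmult_1_r (Kfun h t m)). apply Kfun_mul_ge.
  unfold Knum.
  assert (0 <= t ^ 2 * t) by (apply Rmult_le_pos; [apply pow2_ge_0|lra]).
  assert (0 <= 1 + m ^ 2) by (pose proof (pow2_ge_0 m); lra).
  assert (2 * (1 + m ^ 2) * m <= 2 * (1 + m ^ 2) * (h ^ 2 * t))
    by (apply Rmult_le_compat_l; lra).
  assert (0 <= h ^ 2 * (1 + m ^ 2) * m) by (apply Rmult_le_pos; nra).
  nra.
Qed.

Lemma Kfun_tau_ge_quarter t m : 0 < m -> m <= t -> m <= h ^ 2 * t -> 1 <= t ->
  1 / 4 <= Kfun h t m * t.
Proof.
  intros hm ht hht h1. apply Kfun_mul_ge.
  assert (hm2 : 0 <= m ^ 2) by apply pow2_ge_0.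
  assert (ht2 : 1 <= t ^ 2) by nra.
  assert (hD : Kden t m <= (1 + 2 * t ^ 2) * (h ^ 2 + 2 * t ^ 2))
    by (unfold Kden; apply Rmult_le_compat; nra).
  assert (hN : 2 * t ^ 2 * t ^ 2 + h ^ 2 * t ^ 2 <= Knum t m * t).
  { unfold Knum.
    assert ((1 + m ^ 2) * (m * t) <= (1 + m ^ 2) * (h ^ 2 * t * t))
      by (apply Rmult_le_compat_l; nra).
    assert (0 <= h ^ 2 * (1 + m ^ 2) * (m * t)) by (apply Rmult_le_pos; nra).
    assert (h ^ 2 * t ^ 2 <= h ^ 2 * (1 + m ^ 2) * t ^ 2) by nra.
    nra. }
  assert (t ^ 2 <= t ^ 2 * t ^ 2) by nra.
  assert (h ^ 2 <= h ^ 2 * t ^ 2) by nra.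
  nra.
Qed.

Definition slope_num t m :=
  h ^ 2 * m + 2 * h ^ 2 * (t ^ 2 + m ^ 2) * (m + t)
  + (t ^ 2 + m ^ 2) * (m + 2 * t) * (t ^ 2 + h ^ 2 * m ^ 2).

Lemma slope_num_neg t m : m < 0 -> t <= 0 -> slope_num t m < 0.
Proof.
  intros hm ht. unfold slope_num.
  assert (hr : 0 <= t ^ 2 + m ^ 2) by nra.
  assert (2 * h ^ 2 * (t ^ 2 + m ^ 2) * (m + t) <= 0).
  { assert (0 <= 2 * h ^ 2 * (t ^ 2 + m ^ 2)) by nra. nra. }
  assert ((t ^ 2 + m ^ 2) * (m + 2 * t) * (t ^ 2 + h ^ 2 * m ^ 2) <= 0).
  { assert (0 <= (t ^ 2 + m ^ 2) * (t ^ 2 + h ^ 2 * m ^ 2)) by nra. nra. }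
  assert (h ^ 2 * m < 0) by (pose proof h2_pos; nra).
  lra.
Qed.

Lemma slope_num_pos_far t m : m < 0 -> - m <= t -> 1 + h ^ 2 <= t ^ 2 -> 0 < slope_num t m.
Proof.
  intros hm ht ht2. unfold slope_num.
  assert (0 <= 2 * h ^ 2 * (t ^ 2 + m ^ 2) * (m + t)).
  { assert (0 <= 2 * h ^ 2 * (t ^ 2 + m ^ 2)) by nra. nra. }
  assert (hP : t ^ 2 * t ^ 2 <= (t ^ 2 + m ^ 2) * (t ^ 2 + h ^ 2 * m ^ 2))
    by (apply Rmult_le_compat; nra).
  assert ((t ^ 2 + m ^ 2) * (t ^ 2 + h ^ 2 * m ^ 2) * (- m)
          <= (t ^ 2 + m ^ 2) * (m + 2 * t) * (t ^ 2 + h ^ 2 * m ^ 2)).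
  { assert (0 <= (t ^ 2 + m ^ 2) * (t ^ 2 + h ^ 2 * m ^ 2)) by nra. nra. }
  assert (t ^ 2 * t ^ 2 * (- m) <= (t ^ 2 + m ^ 2) * (t ^ 2 + h ^ 2 * m ^ 2) * (- m)) by nra.
  assert ((1 + h ^ 2) * (1 + h ^ 2) <= t ^ 2 * t ^ 2) by nra.
  nra.
Qed.

Lemma slope_num_pos t m : 0 < m -> - m / 2 <= t -> 0 < slope_num t m.
Proof.
  intros hm ht. unfold slope_num.
  assert (0 <= 2 * h ^ 2 * (t ^ 2 + m ^ 2) * (m + t)).
  { assert (0 <= 2 * h ^ 2 * (t ^ 2 + m ^ 2)) by nra. nra. }
  assert (0 <= (t ^ 2 + m ^ 2) * (m + 2 * t) * (t ^ 2 + h ^ 2 * m ^ 2)).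
  { assert (0 <= (t ^ 2 + m ^ 2) * (t ^ 2 + h ^ 2 * m ^ 2)) by nra. nra. }
  assert (0 < h ^ 2 * m) by (pose proof h2_pos; nra).
  lra.
Qed.

Lemma slope_num_ge t m d : 0 < m -> 0 < d <= 1 -> d * m <= m + 2 * t ->
  d * h ^ 2 / (1 + h ^ 2) * m * Kden t m <= slope_num t m.
Proof.
  intros hm hd hw. unfold slope_num, Kden.
  set (r := t ^ 2 + m ^ 2). set (k := h ^ 2 / (1 + h ^ 2)).
  assert (hr : 0 <= r) by (unfold r; nra).
  assert (h2 : 0 < h ^ 2) by nra.
  assert (hk : k * (1 + h ^ 2) = h ^ 2) by (unfold k; field; nra).
  assert (hk0 : 0 < k) by (unfold k; apply Rdiv_lt_0_compat; nra).
  assert (hk1 : k <= 1) by nra.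
  replace (d * h ^ 2 / (1 + h ^ 2)) with (d * k) by (unfold k; field; nra).
  assert (hq : k * r <= t ^ 2 + h ^ 2 * m ^ 2).
  { apply (Rmult_le_reg_r (1 + h ^ 2)); [nra|].
    replace (k * r * (1 + h ^ 2)) with (h ^ 2 * r) by (unfold k; field; nra).
    unfold r. pose proof (pow2_ge_0 m). nra. }
  assert (h2r : h ^ 2 * r * m <= 2 * h ^ 2 * r * (m + t)).
  { assert (0 <= h ^ 2 * r * (m + 2 * t)) by (apply Rmult_le_pos; nra). nra. }
  assert (h3r : r * (d * m) * (k * r) <= r * (m + 2 * t) * (t ^ 2 + h ^ 2 * m ^ 2)).
  { apply Rmult_le_compat; try (apply Rmult_le_pos); nra. }
  assert (hD : d * k * m * ((1 + r) * (h ^ 2 + r))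
               = m * (d * k * h ^ 2 + d * (k * (1 + h ^ 2)) * r + d * k * r * r)) by ring.
  rewrite hk in hD.
  assert (d * k * h ^ 2 <= h ^ 2) by nra.
  assert (d * h ^ 2 * r <= h ^ 2 * r) by (apply Rmult_le_compat_r; nra).
  nra.
Qed.

Definition Pw t m := (1 + (t ^ 2 + m ^ 2)) / ((1 + m ^ 2) * (h ^ 2 + (t ^ 2 + m ^ 2))).

Definition Gfun t m := m * sqrt (Pw t m).

Definition dGfun t m := - 2 * t ^ 2 * (t ^ 2 + h ^ 2 + h ^ 2 * m ^ 2)
  / (sqrt (Pw t m) * (h ^ 2 + (t ^ 2 + m ^ 2)) ^ 2 * (1 + m ^ 2) ^ 2).

Lemma Pw_pos t m : 0 < Pw t m.
Proof. pose proof h2_pos. unfold Pw. apply Rdiv_lt_0_compat; [|apply Rmult_lt_0_compat]; nra. Qed.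

Lemma sqrt_Pw_pos t m : 0 < sqrt (Pw t m).
Proof. apply sqrt_lt_R0, Pw_pos. Qed.

Lemma Pw_le t m : h ^ 2 * Pw t m <= 1 + h ^ 2.
Proof.
  pose proof h2_pos. unfold Pw.
  set (r := t ^ 2 + m ^ 2). assert (0 <= r) by (unfold r; nra).
  assert (0 <= m ^ 2) by apply pow2_ge_0.
  assert (hD : 0 < (1 + m ^ 2) * (h ^ 2 + r)) by (apply Rmult_lt_0_compat; lra).
  apply (Rmult_le_reg_r ((1 + m ^ 2) * (h ^ 2 + r))); [exact hD|].
  replace (h ^ 2 * ((1 + r) / ((1 + m ^ 2) * (h ^ 2 + r))) * ((1 + m ^ 2) * (h ^ 2 + r)))
    with (h ^ 2 * (1 + r)) by (field; lra).
  nra.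
Qed.

Lemma Gfun_neg_iff t m : Gfun t m < 0 <-> m < 0.
Proof. pose proof (sqrt_Pw_pos t m). unfold Gfun. split; intros; nra. Qed.

Lemma Gfun_nonpos_iff t m : Gfun t m <= 0 <-> m <= 0.
Proof. pose proof (sqrt_Pw_pos t m). unfold Gfun. split; intros; nra. Qed.

Lemma Gfun_sqr_le t m : h ^ 2 * Gfun t m ^ 2 <= (1 + h ^ 2) * m ^ 2.
Proof.
  pose proof (Pw_pos t m). pose proof (Pw_le t m).
  unfold Gfun. replace ((m * sqrt (Pw t m)) ^ 2) with (m ^ 2 * (sqrt (Pw t m) * sqrt (Pw t m)))
    by ring.
  rewrite sqrt_sqrt by lra.
  pose proof (pow2_ge_0 m). nra.
Qed.

Lemma dGfun_nonpos t m : dGfun t m <= 0.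
Proof.
  pose proof h2_pos. pose proof (sqrt_Pw_pos t m). unfold dGfun.
  assert (hY : 0 < sqrt (Pw t m) * (h ^ 2 + (t ^ 2 + m ^ 2)) ^ 2 * (1 + m ^ 2) ^ 2).
  { apply Rmult_lt_0_compat; [apply Rmult_lt_0_compat|]; try apply pow_lt; nra. }
  pose proof (Rinv_0_lt_compat _ hY).
  assert (0 <= t ^ 2 * (t ^ 2 + h ^ 2 + h ^ 2 * m ^ 2)) by (apply Rmult_le_pos; nra).
  unfold Rdiv. nra.
Qed.

Definition dslope t m := slope_num t m / (m ^ 2 * Kden t m).

Lemma dslope_denom_pos t m : m <> 0 -> 0 < m ^ 2 * Kden t m.
Proof.
  intros hm. pose proof (Kden_pos t m).
  apply Rmult_lt_0_compat; [destruct (Rdichotomy _ _ hm); nra|lra].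
Qed.

Lemma dslope_pos t m : m <> 0 -> 0 < slope_num t m -> 0 < dslope t m.
Proof. intros hm hf. apply Rdiv_lt_0_compat; [exact hf|now apply dslope_denom_pos]. Qed.

Lemma dslope_neg t m : m <> 0 -> slope_num t m < 0 -> dslope t m < 0.
Proof.
  intros hm hf. pose proof (Rinv_0_lt_compat _ (dslope_denom_pos t m hm)).
  unfold dslope, Rdiv. nra.
Qed.

Lemma dslope_ge t m d : 0 < m -> 0 < d <= 1 -> d * m <= m + 2 * t ->
  d * h ^ 2 / (1 + h ^ 2) / m <= dslope t m.
Proof.
  intros hm hd hw. pose proof (slope_num_ge t m d hm hd hw) as hf. pose proof (Kden_pos t m).
  unfold dslope. apply (Rmult_le_reg_r (m ^ 2 * Kden t m)); [apply Rmult_lt_0_compat; nra|].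
  replace (d * h ^ 2 / (1 + h ^ 2) / m * (m ^ 2 * Kden t m))
    with (d * h ^ 2 / (1 + h ^ 2) * m * Kden t m) by (field; split; nra).
  replace (slope_num t m / (m ^ 2 * Kden t m) * (m ^ 2 * Kden t m))
    with (slope_num t m) by (field; split; nra).
  exact hf.
Qed.

Section Trajectory.

Variables tau mu : R -> R.
Hypothesis tau_deriv : forall s, derivable_pt_lim tau s (1 + Kfun h (tau s) (mu s) * mu s).
Hypothesis mu_deriv : forall s, derivable_pt_lim mu s (- (Kfun h (tau s) (mu s) * tau s)).

Lemma rho_deriv s : derivable_pt_lim (fun s => tau s ^ 2 + mu s ^ 2) s (2 * tau s).
Proof.
  eapply deriv_eq; [apply deriv_plus; apply deriv_sqr; auto|ring].
Qed.

Lemma G_deriv s : derivable_pt_lim (fun s => Gfun (tau s) (mu s)) s (dGfun (tau s) (mu s)).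
Proof.
  pose proof h2_pos. pose proof (Pw_pos (tau s) (mu s)) as hP.
  pose proof (sqrt_Pw_pos (tau s) (mu s)) as hS.
  assert (hSS : sqrt (Pw (tau s) (mu s)) * sqrt (Pw (tau s) (mu s)) = Pw (tau s) (mu s))
    by (apply sqrt_sqrt; lra).
  unfold Gfun. eapply deriv_eq.
  { apply deriv_mult; [apply mu_deriv|]. apply deriv_sqrt; [|exact hP]. unfold Pw.
    apply deriv_div; [| |apply Rgt_not_eq; apply Rmult_lt_0_compat; nra].
    - apply deriv_plus; [apply derivable_pt_lim_const|].
      apply deriv_plus; apply deriv_sqr; auto.
    - apply deriv_mult; (apply deriv_plus; [apply derivable_pt_lim_const|]).
      + apply deriv_sqr; auto.
      + apply deriv_plus; apply deriv_sqr; auto. }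
  cbv beta. set (S := sqrt (Pw (tau s) (mu s))) in *.
  set (t := tau s) in *. set (m := mu s) in *.
  unfold dGfun. change (sqrt (Pw t m)) with S.
  match goal with |- ?A * S + m * (?X / (2 * S)) = _ =>
    transitivity ((2 * A * (S * S) + m * X) / (2 * S));
      [field; repeat split; apply Rgt_not_eq; nra|] end.
  rewrite hSS. unfold Pw. rewrite Kfun_eq. unfold Knum, Kden.
  clearbody t m S. field. repeat split; apply Rgt_not_eq; nra.
Qed.

Lemma G_nonincreasing a b : a <= b -> Gfun (tau b) (mu b) <= Gfun (tau a) (mu a).
Proof.
  intros hab.
  pose proof (MVT_upper_bound (fun s => Gfun (tau s) (mu s)) (fun s => dGfun (tau s) (mu s))
                a b 0 hab (fun t _ => G_deriv t) (fun t _ => dGfun_nonpos _ _)).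
  lra.
Qed.

Lemma slope_deriv s : mu s <> 0 ->
  derivable_pt_lim (fun s => tau s / mu s) s (dslope (tau s) (mu s)).
Proof.
  intros hmu. pose proof (Kden_pos (tau s) (mu s)).
  eapply deriv_eq; [apply deriv_div; auto|].
  unfold dslope, slope_num. rewrite Kfun_eq. unfold Knum, Kden in *.
  field. repeat split; try exact hmu; apply Rgt_not_eq; nra.
Qed.

Lemma mu_neg_forward s1 : mu s1 < 0 -> forall s, s1 <= s -> mu s < 0.
Proof.
  intros h1 s hs. apply (Gfun_neg_iff (tau s)).
  apply (Rle_lt_trans _ (Gfun (tau s1) (mu s1))); [now apply G_nonincreasing|].
  now apply Gfun_neg_iff.
Qed.

Lemma mu_sqr_ge_forward s1 : mu s1 < 0 ->
  exists m0, 0 < m0 /\ forall s, s1 <= s -> m0 <= mu s ^ 2.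
Proof.
  intros h1. pose proof h2_pos.
  set (g1 := Gfun (tau s1) (mu s1)).
  assert (hg1 : g1 < 0) by now apply Gfun_neg_iff.
  exists (h ^ 2 * g1 ^ 2 / (1 + h ^ 2)). split.
  - apply Rdiv_lt_0_compat; [apply Rmult_lt_0_compat|]; nra.
  - intros s hs. pose proof (G_nonincreasing s1 s hs) as hG. fold g1 in hG.
    pose proof (Gfun_sqr_le (tau s) (mu s)).
    assert (g1 ^ 2 <= Gfun (tau s) (mu s) ^ 2) by nra.
    apply (Rmult_le_reg_r (1 + h ^ 2)); [lra|].
    replace (h ^ 2 * g1 ^ 2 / (1 + h ^ 2) * (1 + h ^ 2)) with (h ^ 2 * g1 ^ 2) by (field; lra).
    nra.
Qed.

Lemma slope_le_forward s1 : mu s1 < 0 ->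
  forall s, s1 <= s -> tau s / mu s <= Rmax (tau s1 / mu s1) 0.
Proof.
  intros h1. pose proof (mu_neg_forward s1 h1) as hneg.
  apply (barrier_below _ (fun s => dslope (tau s) (mu s))).
  - intros t ht. apply slope_deriv. specialize (hneg t ht). lra.
  - apply Rmax_l.
  - intros t ht heq. specialize (hneg t ht).
    apply dslope_neg; [lra|]. apply slope_num_neg; [lra|].
    pose proof (Rmax_r (tau s1 / mu s1) 0).
    assert (tau t = Rmax (tau s1 / mu s1) 0 * mu t) by (rewrite <- heq; field; lra).
    nra.
Qed.

Lemma slope_ge_forward s1 : mu s1 < 0 -> exists L, forall s, s1 <= s -> L <= tau s / mu s.
Proof.
  intros h1. pose proof (mu_neg_forward s1 h1) as hneg.
  destruct (mu_sqr_ge_forward s1 h1) as [m0 [hm0 hmu]].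
  set (M0 := Rmax 1 ((1 + h ^ 2) / m0)).
  assert (hM1 : 1 <= M0) by apply Rmax_l.
  assert (hM0 : 1 + h ^ 2 <= M0 * m0).
  { apply (Rmult_le_reg_r (/ m0)); [now apply Rinv_0_lt_compat|].
    replace (M0 * m0 * / m0) with M0 by (field; lra). apply Rmax_r. }
  set (L := Rmin (tau s1 / mu s1) (- M0)). exists L.
  apply (barrier_above _ (fun s => dslope (tau s) (mu s))).
  - intros t ht. apply slope_deriv. specialize (hneg t ht). lra.
  - apply Rmin_l.
  - intros t ht heq. specialize (hneg t ht). specialize (hmu t ht).
    assert (hL : L <= - M0) by apply Rmin_r.
    assert (htL : tau t = L * mu t) by (rewrite <- heq; field; lra).
    apply dslope_pos; [lra|]. apply slope_num_pos_far; [lra| nra |].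
    rewrite htL. assert (M0 * M0 <= L * L) by nra.
    assert (M0 * m0 <= M0 * M0 * m0) by nra.
    assert (M0 * M0 * m0 <= L * L * mu t ^ 2) by (apply Rmult_le_compat; nra).
    nra.
Qed.

Lemma slope_bounded_forward s1 : mu s1 < 0 ->
  exists M, forall s, s1 <= s -> mu s < 0 /\ Rabs (tau s / mu s) <= M.
Proof.
  intros h1. destruct (slope_ge_forward s1 h1) as [L hL].
  exists (Rmax (Rmax (tau s1 / mu s1) 0) (- L)). intros s hs.
  split; [now apply (mu_neg_forward s1)|].
  pose proof (slope_le_forward s1 h1 s hs). specialize (hL s hs).
  pose proof (Rmax_l (Rmax (tau s1 / mu s1) 0) (- L)).
  pose proof (Rmax_r (Rmax (tau s1 / mu s1) 0) (- L)).
  apply Rabs_le. lra.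
Qed.

Lemma mu_pos_of_nonneg : (forall s, 0 <= mu s) -> forall s, 0 < mu s.
Proof.
  intros hge s1. destruct (hge s1) as [|h0]; [assumption|exfalso].
  assert (hz : forall s, s1 <= s -> mu s = 0).
  { intros s hs. apply Rle_antisym; [|apply hge].
    apply (Gfun_nonpos_iff (tau s)).
    apply (Rle_trans _ (Gfun (tau s1) (mu s1))); [now apply G_nonincreasing|].
    apply Gfun_nonpos_iff. lra. }
  assert (htz : forall s, s1 < s -> tau s = 0).
  { intros s hs.
    pose proof (derivable_pt_lim_locally_const mu s _ s1 (s + 1) 0 ltac:(lra)
                  (fun z hz' => hz z ltac:(lra)) (mu_deriv s)) as hK.
    rewrite (hz s ltac:(lra)), Kfun_tau_mu0 in hK.
    assert (0 < 1 + tau s ^ 2) by (pose proof (pow2_ge_0 (tau s)); lra).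
    assert (tau s ^ 2 = 0).
    { apply (Rmult_eq_reg_r (2 / (1 + tau s ^ 2))); [|apply Rgt_not_eq, Rdiv_lt_0_compat; lra].
      unfold Rdiv in *. lra. }
    nra. }
  pose proof (derivable_pt_lim_locally_const tau (s1 + 1) _ s1 (s1 + 2) 0 ltac:(lra)
                (fun z hz' => htz z ltac:(lra)) (tau_deriv (s1 + 1))) as h1.
  rewrite (hz (s1 + 1) ltac:(lra)) in h1. lra.
Qed.

Lemma not_slope_le_half : (forall s, 0 < mu s) -> (forall s, tau s <= - mu s / 2) -> False.
Proof.
  intros hpos hneg.
  set (rho := fun s => tau s ^ 2 + mu s ^ 2).
  assert (hrho : forall s, 0 <= s -> rho s <= rho 0).
  { intros s hs.
    enough (rho s - rho 0 <= 0 * (s - 0)) by lra.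
    apply (MVT_upper_bound rho (fun s => 2 * tau s) 0 s 0 hs (fun u _ => rho_deriv u)).
    intros u _. specialize (hneg u). specialize (hpos u). lra. }
  set (k := (2 + h ^ 2) * (1 + rho 0) ^ 2 / h ^ 2).
  assert (hk : 0 <= k).
  { pose proof h2_pos. unfold k. apply Rmult_le_pos; [apply Rmult_le_pos; [lra|apply pow2_ge_0]|].
    left. now apply Rinv_0_lt_compat. }
  set (psi := fun s => tau s - k * rho s).
  assert (hpsi : forall s, 0 <= s -> 1 * (s - 0) <= psi s - psi 0).
  { intros s hs.
    apply (MVT_lower_bound psi (fun s => (1 + Kfun h (tau s) (mu s) * mu s) - k * (2 * tau s)));
      [exact hs| |].
    - intros u _. apply deriv_minus; [apply tau_deriv|apply deriv_scal, rho_deriv].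
    - intros u hu. pose proof (Kfun_mu_ge_ball (rho 0) (tau u) (mu u) (hpos u) (hneg u)
                                (hrho u ltac:(lra))) as hK.
      fold k in hK. lra. }
  set (s := Rabs (psi 0) + 1).
  assert (hs : 0 <= s) by (unfold s; pose proof (Rabs_pos (psi 0)); lra).
  specialize (hpsi s hs).
  assert (psi s <= 0).
  { unfold psi, rho. specialize (hneg s). specialize (hpos s).
    pose proof (pow2_ge_0 (tau s)). pose proof (pow2_ge_0 (mu s)). nra. }
  pose proof (Rle_abs (- psi 0)) as habs. rewrite Rabs_Ropp in habs. unfold s in *. lra.
Qed.

Lemma slope_stays_above s0 L : (forall s, 0 < mu s) -> -1 / 2 < L ->
  L <= tau s0 / mu s0 -> forall s, s0 <= s -> L <= tau s / mu s.
Proof.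
  intros hpos hL h0.
  apply (barrier_above _ (fun s => dslope (tau s) (mu s))); [|exact h0|].
  - intros t _. apply slope_deriv. specialize (hpos t). lra.
  - intros t _ heq. specialize (hpos t).
    apply dslope_pos; [lra|]. apply slope_num_pos; [lra|].
    assert (tau t = L * mu t) by (rewrite <- heq; field; lra). nra.
Qed.

Lemma mu_le_affine a b : a <= b -> mu b <= mu a + (1 + h ^ 2) * (b - a).
Proof.
  intros hab.
  enough (mu b - mu a <= (1 + h ^ 2) * (b - a)) by lra.
  apply (MVT_upper_bound mu (fun s => - (Kfun h (tau s) (mu s) * tau s))); auto.
  intros t _. pose proof (Kfun_tau_ge (tau t) (mu t)). lra.
Qed.

(* Above -1/2 the slope grows at least like c / mu, and mu grows at most linearly. *)
Lemma slope_unbounded s1 : (forall s, 0 < mu s) -> -1 / 2 < tau s1 / mu s1 ->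
  forall A, exists s, s1 <= s /\ A <= tau s / mu s.
Proof.
  intros hpos h1.
  pose proof h2_pos.
  set (L := Rmin (tau s1 / mu s1) 0).
  assert (hL : -1 / 2 < L) by (apply Rmin_glb_lt; lra).
  assert (hL0 : L <= 0) by apply Rmin_r.
  set (d := 1 + 2 * L).
  apply (unbounded_of_deriv_ge_inv_affine _ (fun s => dslope (tau s) (mu s)) s1 (mu s1)
           (1 + h ^ 2) (d * h ^ 2 / (1 + h ^ 2))); [apply hpos|lra| |intros t _ |].
  - apply Rdiv_lt_0_compat; [apply Rmult_lt_0_compat; unfold d|]; lra.
  - apply slope_deriv. specialize (hpos t). lra.
  - intros t ht. specialize (hpos t) as hmu.
    pose proof (slope_stays_above s1 L hpos hL (Rmin_l _ _) t ht) as hLt.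
    assert (hw : d * mu t <= mu t + 2 * tau t).
    { assert (L * mu t <= tau t).
      { apply (Rmult_le_reg_r (/ mu t)); [now apply Rinv_0_lt_compat|].
        replace (L * mu t * / mu t) with L by (field; lra). exact hLt. }
      unfold d. lra. }
    pose proof (dslope_ge (tau t) (mu t) d hmu ltac:(unfold d; lra) hw) as hds.
    pose proof (mu_le_affine s1 t ht).
    assert (hc : 0 <= d * h ^ 2 / (1 + h ^ 2))
      by (apply Rmult_le_pos; [apply Rmult_le_pos; unfold d|left; apply Rinv_0_lt_compat]; lra).
    eapply Rle_trans; [|exact hds]. unfold Rdiv at 2 3.
    apply Rmult_le_compat_l; [exact hc|]. apply Rinv_le_contravar; lra.
Qed.

Lemma not_slope_ge_steep s3 : (forall s, 0 < mu s) -> 1 + / h ^ 2 <= tau s3 / mu s3 -> False.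
Proof.
  intros hpos h3. pose proof h2_pos.
  assert (hinv : 0 < / h ^ 2) by now apply Rinv_0_lt_compat.
  assert (hsteep : forall s, s3 <= s -> mu s <= tau s /\ mu s <= h ^ 2 * tau s).
  { intros s hs. specialize (hpos s) as hmu.
    pose proof (slope_stays_above s3 (1 + / h ^ 2) hpos ltac:(lra) h3 s hs) as hsl.
    assert ((1 + / h ^ 2) * mu s <= tau s).
    { apply (Rmult_le_reg_r (/ mu s)); [now apply Rinv_0_lt_compat|].
      replace ((1 + / h ^ 2) * mu s * / mu s) with (1 + / h ^ 2) by (field; lra). exact hsl. }
    assert (h ^ 2 * (1 + / h ^ 2) = h ^ 2 + 1) by (field; lra).
    split; nra. }
  assert (htau : forall s, s3 <= s -> s - s3 <= tau s).
  { intros s hs.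
    assert (0 < tau s3) by (destruct (hsteep s3 (Rle_refl _)); specialize (hpos s3); lra).
    enough (1 * (s - s3) <= tau s - tau s3) by lra.
    apply (MVT_lower_bound tau _ s3 s 1 hs (fun t _ => tau_deriv t)).
    intros t ht. destruct (hsteep t ltac:(lra)). specialize (hpos t).
    pose proof (Kfun_nonneg_steep (tau t) (mu t) ltac:(lra) ltac:(lra) ltac:(lra)). nra. }
  set (s4 := s3 + 1). set (s5 := s4 + 4 * (mu s4 + 1)).
  assert (hs45 : s4 <= s5) by (unfold s5; specialize (hpos s4); lra).
  enough (mu s5 - mu s4 <= - (1 / 4) * (s5 - s4)).
  { specialize (hpos s5). unfold s5 in *. lra. }
  apply (MVT_upper_bound mu _ s4 s5 (- (1 / 4)) hs45 (fun t _ => mu_deriv t)). intros t ht.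
  destruct (hsteep t ltac:(unfold s4 in *; lra)). specialize (hpos t).
  pose proof (htau t ltac:(unfold s4 in *; lra)).
  pose proof (Kfun_tau_ge_quarter (tau t) (mu t) ltac:(lra) ltac:(lra) ltac:(lra)
                ltac:(unfold s4 in *; lra)).
  lra.
Qed.

Lemma mu_neg_somewhere : exists s, mu s < 0.
Proof.
  destruct (classic (exists s, mu s < 0)) as [|hn]; [assumption|exfalso].
  assert (hpos : forall s, 0 < mu s).
  { apply mu_pos_of_nonneg. intros s. apply Rnot_lt_le. intros hs. apply hn. now exists s. }
  destruct (classic (exists s1, -1 / 2 < tau s1 / mu s1)) as [[s1 h1]|hn2].
  - destruct (slope_unbounded s1 hpos h1 (1 + / h ^ 2)) as [s3 [_ h3]].
    exact (not_slope_ge_steep s3 hpos h3).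
  - apply not_slope_le_half; [exact hpos|]. intros s. specialize (hpos s).
    assert (hsl : tau s / mu s <= -1 / 2).
    { apply Rnot_lt_le. intros hs. apply hn2. now exists s. }
    apply (Rmult_le_reg_r (/ mu s)); [now apply Rinv_0_lt_compat|].
    replace (- mu s / 2 * / mu s) with (-1 / 2) by (field; lra). exact hsl.
Qed.

Lemma slope_bounded_eventually :
  exists s1 M, forall s, s1 <= s -> mu s <> 0 /\ Rabs (tau s / mu s) <= M.
Proof.
  destruct mu_neg_somewhere as [s1 h1]. destruct (slope_bounded_forward s1 h1) as [M hM].
  exists s1, M. intros s hs. destruct (hM s hs). split; [lra|assumption].
Qed.

End Trajectory.

Lemma reflect_solution (tau mu : R -> R) :
  (forall s, derivable_pt_lim tau s (1 + Kfun h (tau s) (mu s) * mu s)) ->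
  (forall s, derivable_pt_lim mu s (- (Kfun h (tau s) (mu s) * tau s))) ->
  (forall s, derivable_pt_lim (fun s => - tau (- s)) s
     (1 + Kfun h (- tau (- s)) (- mu (- s)) * - mu (- s))) /\
  (forall s, derivable_pt_lim (fun s => - mu (- s)) s
     (- (Kfun h (- tau (- s)) (- mu (- s)) * - tau (- s)))).
Proof.
  intros dtau dmu. split; intros s; apply deriv_reflect;
    (eapply deriv_eq; [apply dtau || apply dmu|]); rewrite Kfun_opp; ring.
Qed.

Lemma slope_bounded_backward (tau mu : R -> R) :
  (forall s, derivable_pt_lim tau s (1 + Kfun h (tau s) (mu s) * mu s)) ->
  (forall s, derivable_pt_lim mu s (- (Kfun h (tau s) (mu s) * tau s))) ->
  exists s2 M, forall s, s <= s2 -> mu s <> 0 /\ Rabs (tau s / mu s) <= M.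
Proof.
  intros dtau dmu. destruct (reflect_solution tau mu dtau dmu) as [dtau' dmu'].
  destruct (slope_bounded_eventually _ _ dtau' dmu') as [s2 [M hM]].
  exists (- s2), M. intros s hs. destruct (hM (- s) ltac:(lra)) as [hmu hb].
  rewrite !Ropp_involutive in hmu, hb. split.
  - intros e. apply hmu. rewrite e. ring.
  - replace (tau s / mu s) with (- tau s / - mu s) by (field; intros e; apply hmu; rewrite e; ring).
    exact hb.
Qed.

End Flow.

Theorem claim7 (h : R) (tau mu : R -> R) :
  0 < h ->
  (forall s, derivable_pt_lim tau s (1 + Kfun h (tau s) (mu s) * mu s)) ->
  (forall s, derivable_pt_lim mu s (- (Kfun h (tau s) (mu s) * tau s))) ->
  exists A B : R, A <= B /\
    (forall s, (s < A \/ B < s) -> mu s <> 0) /\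
    (exists M : R, forall s, (s < A \/ B < s) -> Rabs (- tau s / mu s) <= M).
Proof.
  intros hpos dtau dmu.
  destruct (slope_bounded_backward h hpos tau mu dtau dmu) as [A [M1 hA]].
  destruct (slope_bounded_eventually h hpos tau mu dtau dmu) as [B [M2 hB]].
  pose proof (Rmin_l A B). pose proof (Rmax_r A B). pose proof (Rmax_l A B).
  assert (hout : forall s, s < Rmin A B \/ Rmax A B < s ->
            mu s <> 0 /\ Rabs (tau s / mu s) <= Rmax M1 M2).
  { pose proof (Rmax_l M1 M2). pose proof (Rmax_r M1 M2).
    intros s [hs|hs]; [destruct (hA s ltac:(lra))|destruct (hB s ltac:(lra))];
      split; auto; lra. }
  exists (Rmin A B), (Rmax A B). split; [lra|split].
  - intros s hs. apply (hout s hs).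
  - exists (Rmax M1 M2). intros s hs. destruct (hout s hs) as [_ hb].
    unfold Rdiv. rewrite Ropp_mult_distr_l_reverse, Rabs_Ropp. exact hb.
Qed.
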